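(* Let $a>1$ and $C_j(n,a)=\binom{n}{j}\left(\frac{1+a}{2}\right)^{n-j}\left(\frac{1-a}{2}\right)^j$. Then for every $z\in\mathbb{C}$, $$\lim_{n\to\infty}\sum_{j=0}^nC_j(n,a)\,e^{\frac{iz}{\sqrt2}(1-2j/n)-\frac14(1-2j/n)^2}=e^{\frac{iza}{\sqrt2}-\frac{a^2}{4}},$$ equivalently $\lim_{n\to\infty}\sum_{j=0}^nC_j(n,a)k_{b_j}(z)=k_{-ia/\sqrt2}(z)$ where $b_j=-\frac{i}{\sqrt2}(1-\frac{2j}{n})$.
   Context: For $w\in\mathbb{C}$, $k_w(z)=e^{z\overline{w}-|w|^2/2}$ denotes the normalized reproducing kernel of the Fock space. *)

From Stdlib Require Import Reals.
From Coquelicot Require Import Coquelicot.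
Open Scope R_scope.

Definition cexp (w : C) : C :=
  (exp (Re w) * cos (Im w), exp (Re w) * sin (Im w)).

Definition Cjna (j n : nat) (a : R) : R :=
  Binomial.C n j * ((1 + a) / 2) ^ (n - j) * ((1 - a) / 2) ^ j.

Definition tjn (j n : nat) : R := 1 - 2 * INR j / INR n.

Definition term (z : C) (j n : nat) : C :=
  cexp (Cplus (Cmult (Cmult Ci z) (RtoC (tjn j n / sqrt 2)))
              (RtoC (- (tjn j n) ^ 2 / 4))).

Definition Ssum (a : R) (z : C) (n : nat) : C :=
  sum_n (fun j => Cmult (RtoC (Cjna j n a)) (term z j n)) n.

From Stdlib Require Import Reals Lra Lia.
From Coquelicot Require Import Coquelicot.
Open Scope R_scope.

(* Read C_j(n,a) as the law of a sum of n independent steps, 1 - a with weight (1+a)/2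
   and -1 - a with weight (1-a)/2; then t_j - a is that sum divided by n.  The steps
   have mean zero, although for a > 1 the weights are not probabilities.  Expanding an
   entire function g around a turns sum_j C_j(n,a) g(t_j) into sum_k d_k m_k(n) / n^k,
   with m_k(n) the k-th moment of the walk.  A recurrence in n gives |m_k(n)| <= (c n)^k
   and, thanks to the zero mean, |m_k(n)| <= (2c)^k n^(k-1) for k >= 1: the normalized
   moments are bounded by (2c)^k and tend to 0 for k >= 1, so Tannery's theorem yields
   the limit d_0 = g(a).  Real and imaginary parts of the summand are entire in t. *)

Lemma CV_radius_infinite (d : nat -> R) :
  (forall x, ex_pseries d x) -> CV_radius d = p_infty.
Proof.
  intros Hd.
  destruct (CV_radius d) as [r | | ] eqn:Er.
  - exfalso. apply (CV_disk_outside d (Rabs r + 1)).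
    + rewrite Er. simpl. rewrite Rabs_pos_eq by (pose proof (Rabs_pos r); lra).
      pose proof (Rle_abs r). lra.
    + apply ex_series_lim_0. destruct (Hd (Rabs r + 1)) as [l Hl].
      exists l. apply is_pseries_R, Hl.
  - reflexivity.
  - pose proof (CV_radius_ge_0 d) as H0. rewrite Er in H0. contradiction.
Qed.

Definition entire (g : R -> R) : Prop :=
  exists d : nat -> R, forall x, is_pseries d x (g x).

Lemma entire_pseries (g : R -> R) :
  entire g -> exists d, CV_radius d = p_infty /\ forall x, is_pseries d x (g x).
Proof.
  intros [d Hd]. exists d. split; [|exact Hd].
  apply CV_radius_infinite. intros x. exists (g x). apply Hd.
Qed.

Lemma entire_ext (g h : R -> R) : (forall x, g x = h x) -> entire g -> entire h.
Proof. intros E [d Hd]. exists d. intros x. rewrite <- E. apply Hd. Qed.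

Lemma entire_plus (g h : R -> R) : entire g -> entire h -> entire (fun x => g x + h x).
Proof.
  intros [d Hd] [e He]. exists (PS_plus d e). intros x.
  apply (is_pseries_plus d e x (g x) (h x)); auto.
Qed.

Lemma entire_mult (g h : R -> R) : entire g -> entire h -> entire (fun x => g x * h x).
Proof.
  intros Hg Hh.
  destruct (entire_pseries g Hg) as [d [Rd Hd]], (entire_pseries h Hh) as [e [Re He]].
  exists (PS_mult d e). intros x.
  apply is_pseries_mult; auto; [rewrite Rd | rewrite Re]; exact I.
Qed.

Lemma entire_scal (c : R) (g : R -> R) : entire g -> entire (fun x => c * g x).
Proof.
  intros [d Hd]. exists (PS_scal c d). intros x.
  apply (is_pseries_scal c d x (g x)); [apply Rmult_comm | apply Hd].
Qed.

Lemma entire_comp_scal (c : R) (g : R -> R) : entire g -> entire (fun x => g (c * x)).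
Proof.
  intros [d Hd]. exists (fun n => d n * c ^ n). intros x.
  apply is_pseries_R. eapply is_series_ext; [|exact (proj1 (is_pseries_R _ _ _) (Hd (c * x)))].
  intros n. simpl. rewrite Rpow_mult_distr. ring.
Qed.

Definition interleave (e o : nat -> R) (n : nat) : R :=
  if Nat.even n then e (Nat.div2 n) else o (Nat.div2 n).

Lemma is_pseries_interleave (e o : nat -> R) (x le lo : R) :
  is_pseries e (x ^ 2) le -> is_pseries o (x ^ 2) lo ->
  is_pseries (interleave e o) x (le + x * lo).
Proof.
  intros He Ho. apply is_pseries_odd_even.
  - eapply is_pseries_ext; [|exact He]. intros n.
    unfold interleave. rewrite Nat.div2_double, Nat.even_mul. reflexivity.
  - eapply is_pseries_ext; [|exact Ho]. intros n.
    unfold interleave. rewrite Nat.div2_odd', Nat.even_add, Nat.even_mul. reflexivity.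
Qed.

Lemma is_pseries_zero (x : R) : is_pseries (fun _ => 0) x 0.
Proof.
  apply is_pseries_R. unfold is_series.
  apply filterlim_ext with (f := fun _ => 0); [|apply filterlim_const].
  intros n. rewrite sum_n_Reals.
  induction n as [|n IH]; simpl; [|rewrite <- IH]; ring.
Qed.

Lemma entire_comp_sqr (g : R -> R) : entire g -> entire (fun x => g (x ^ 2)).
Proof.
  intros [d Hd]. exists (interleave d (fun _ => 0)). intros x.
  replace (g (x ^ 2)) with (g (x ^ 2) + x * 0) by ring.
  apply is_pseries_interleave; [apply Hd | apply is_pseries_zero].
Qed.

Lemma entire_exp : entire exp.
Proof. exists (fun n => / INR (Factorial.fact n)). apply is_exp_Reals. Qed.

Lemma entire_cos : entire cos.
Proof.
  exists (interleave cos_n (fun _ => 0)). intros x.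
  replace (cos x) with (cos x + x * 0) by ring.
  apply is_pseries_interleave; [|apply is_pseries_zero].
  unfold cos. destruct (exist_cos (Rsqr x)) as [l Hl].
  apply is_pseries_Reals. rewrite <- Rsqr_pow2. exact Hl.
Qed.

Lemma entire_sin : entire sin.
Proof.
  exists (interleave (fun _ => 0) sin_n). intros x.
  replace (sin x) with (0 + sin x) by ring.
  unfold sin. destruct (exist_sin (Rsqr x)) as [l Hl].
  apply is_pseries_interleave; [apply is_pseries_zero|].
  apply is_pseries_Reals. rewrite <- Rsqr_pow2. exact Hl.
Qed.

Lemma entire_exp_quadratic (c0 c1 c2 : R) :
  entire (fun x => exp (c0 + c1 * x + c2 * x ^ 2)).
Proof.
  apply entire_ext with (g := fun x => exp c0 * (exp (c1 * x) * exp (c2 * x ^ 2))).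
  { intros x. rewrite !exp_plus. ring. }
  apply entire_scal, entire_mult.
  - apply entire_comp_scal, entire_exp.
  - apply (entire_comp_sqr (fun y => exp (c2 * y))), entire_comp_scal, entire_exp.
Qed.

Lemma entire_cos_affine (c0 c1 : R) : entire (fun x => cos (c0 + c1 * x)).
Proof.
  apply entire_ext with (g := fun x => cos c0 * cos (c1 * x) + - sin c0 * sin (c1 * x)).
  { intros x. rewrite cos_plus. ring. }
  apply entire_plus; apply entire_scal, entire_comp_scal; [apply entire_cos | apply entire_sin].
Qed.

Lemma entire_sin_affine (c0 c1 : R) : entire (fun x => sin (c0 + c1 * x)).
Proof.
  apply entire_ext with (g := fun x => sin c0 * cos (c1 * x) + cos c0 * sin (c1 * x)).
  { intros x. rewrite sin_plus. ring. }
  apply entire_plus; apply entire_scal, entire_comp_scal; [apply entire_cos | apply entire_sin].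
Qed.

Lemma sum_binomial (n : nat) : sum_f_R0 (fun i => Binomial.C n i) n = 2 ^ n.
Proof.
  replace 2 with (1 + 1) by ring. rewrite binomial.
  apply sum_eq. intros. rewrite !pow1. ring.
Qed.

Lemma binomial_ge0 (n k : nat) : 0 <= Binomial.C n k.
Proof.
  unfold Binomial.C. apply Rle_mult_inv_pos; [apply pos_INR|].
  apply Rmult_lt_0_compat; apply INR_fact_lt_0.
Qed.

Lemma sum_binomial_pascal (A : nat -> R) (m : nat) :
  sum_f_R0 (fun j => Binomial.C (S m) j * A j) (S m) =
  sum_f_R0 (fun j => Binomial.C m j * A j) m +
  sum_f_R0 (fun j => Binomial.C m j * A (S j)) m.
Proof.
  destruct m as [|m].
  - simpl. rewrite !C_n_0, C_n_n. ring.
  - rewrite (decomp_sum (fun j => Binomial.C (S (S m)) j * A j)) by lia. simpl pred.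
    rewrite tech5, (decomp_sum (fun j => Binomial.C (S m) j * A j)) by lia. simpl pred.
    rewrite (tech5 (fun j => Binomial.C (S m) j * A (S j))).
    rewrite !C_n_0, !C_n_n.
    rewrite (sum_eq (fun i => Binomial.C (S (S m)) (S i) * A (S i))
                    (fun i => Binomial.C (S m) i * A (S i) + Binomial.C (S m) (S i) * A (S i)))
      by (intros i Hi; rewrite <- pascal by lia; ring).
    rewrite plus_sum. ring.
Qed.

Lemma sum_f_R0_switch (G : nat -> nat -> R) (m k : nat) :
  sum_f_R0 (fun j => sum_f_R0 (G j) k) m =
  sum_f_R0 (fun i => sum_f_R0 (fun j => G j i) m) k.
Proof.
  rewrite <- !sum_n_Reals.
  rewrite (sum_n_ext _ (fun j => sum_n (G j) k)) by (intros; symmetry; apply sum_n_Reals).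
  rewrite sum_n_switch. apply sum_n_ext. intros. apply sum_n_Reals.
Qed.

Section SignedWalk.

(* p and q need not be nonnegative: this is a signed binomial law. *)
Variables p q u v : R.
Hypothesis p_plus_q : p + q = 1.
Hypothesis step_centered : p * u + q * v = 0.

Definition walk_weight (m j : nat) : R := Binomial.C m j * p ^ (m - j) * q ^ j.
Definition walk_pos (m j : nat) : R := (INR m - INR j) * u + INR j * v.
Definition walk_moment (m k : nat) : R :=
  sum_f_R0 (fun j => walk_weight m j * walk_pos m j ^ k) m.
Definition step_moment (i : nat) : R := p * u ^ i + q * v ^ i.
Definition step_bound : R := (Rabs p + Rabs q) * Rmax (Rabs u) (Rabs v).

Lemma walk_sum_succ (phi : R -> R) (m : nat) :
  sum_f_R0 (fun j => walk_weight (S m) j * phi (walk_pos (S m) j)) (S m) =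
  sum_f_R0 (fun j => walk_weight m j *
                     (p * phi (walk_pos m j + u) + q * phi (walk_pos m j + v))) m.
Proof.
  unfold walk_weight.
  rewrite (sum_eq _ (fun j => Binomial.C (S m) j *
             (p ^ (S m - j) * q ^ j * phi (walk_pos (S m) j)))) by (intros; ring).
  rewrite sum_binomial_pascal, <- plus_sum. apply sum_eq. intros j Hj.
  replace (S m - j)%nat with (S (m - j)) by lia. replace (S m - S j)%nat with (m - j)%nat by lia.
  replace (walk_pos (S m) j) with (walk_pos m j + u)
    by (unfold walk_pos; rewrite S_INR; ring).
  replace (walk_pos (S m) (S j)) with (walk_pos m j + v)
    by (unfold walk_pos; rewrite !S_INR; ring).
  simpl. ring.
Qed.

Lemma walk_moment_succ (m k : nat) :
  walk_moment (S m) k =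
  sum_f_R0 (fun i => Binomial.C k i * walk_moment m i * step_moment (k - i)) k.
Proof.
  unfold walk_moment. rewrite (walk_sum_succ (fun x => x ^ k)).
  transitivity (sum_f_R0 (fun j => sum_f_R0 (fun i =>
    Binomial.C k i * (walk_weight m j * walk_pos m j ^ i) * step_moment (k - i)) k) m).
  - apply sum_eq. intros j _. rewrite !binomial, !scal_sum, <- plus_sum.
    rewrite scal_sum. apply sum_eq. intros i _. unfold step_moment. ring.
  - rewrite sum_f_R0_switch. apply sum_eq. intros i _.
    rewrite scal_sum, (Rmult_comm _ (step_moment (k - i))), scal_sum.
    apply sum_eq. intros. ring.
Qed.

Lemma step_moment_0 : step_moment 0 = 1.
Proof. unfold step_moment. simpl. lra. Qed.

Lemma step_moment_1 : step_moment 1 = 0.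
Proof. unfold step_moment. simpl. lra. Qed.

Lemma walk_moment_0 (m : nat) : walk_moment m 0 = 1.
Proof.
  induction m as [|m IH].
  - unfold walk_moment, walk_weight. simpl. rewrite C_n_0. ring.
  - rewrite walk_moment_succ. simpl. rewrite IH, C_n_0, step_moment_0. ring.
Qed.

Lemma walk_moment_1 (m : nat) : walk_moment m 1 = 0.
Proof.
  induction m as [|m IH].
  - unfold walk_moment, walk_pos. simpl. ring.
  - rewrite walk_moment_succ. simpl. rewrite IH, walk_moment_0, step_moment_1. ring.
Qed.

Lemma walk_moment_start (k : nat) : walk_moment 0 (S k) = 0.
Proof. unfold walk_moment, walk_pos. simpl. ring. Qed.

Lemma step_bound_ge0 : 0 <= step_bound.
Proof.
  unfold step_bound. apply Rmult_le_pos.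
  - pose proof (Rabs_pos p). pose proof (Rabs_pos q). lra.
  - eapply Rle_trans; [apply Rabs_pos | apply Rmax_l].
Qed.

Lemma step_moment_le (i : nat) : Rabs (step_moment i) <= step_bound ^ i.
Proof.
  destruct i as [|i].
  - rewrite step_moment_0, Rabs_R1. simpl. lra.
  - set (s := Rabs p + Rabs q). set (r := Rmax (Rabs u) (Rabs v)).
    assert (Hs : 1 <= s) by (rewrite <- Rabs_R1, <- p_plus_q; apply Rabs_triang).
    assert (Hu : Rabs u ^ S i <= r ^ S i)
      by (apply pow_incr; split; [apply Rabs_pos | apply Rmax_l]).
    assert (Hv : Rabs v ^ S i <= r ^ S i)
      by (apply pow_incr; split; [apply Rabs_pos | apply Rmax_r]).
    assert (Hsi : s <= s ^ S i) by (rewrite <- (pow_1 s) at 1; apply Rle_pow; lia || lra).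
    assert (0 <= r ^ S i) by (apply pow_le; eapply Rle_trans; [apply Rabs_pos | apply Rmax_l]).
    unfold step_moment, step_bound. fold s r. rewrite Rpow_mult_distr.
    eapply Rle_trans; [apply Rabs_triang|]. rewrite !Rabs_mult, <- !RPow_abs.
    apply Rle_trans with (s * r ^ S i); [|apply Rmult_le_compat_r; assumption].
    unfold s. pose proof (Rabs_pos p). pose proof (Rabs_pos q). nra.
Qed.

Lemma walk_moment_le (m k : nat) : Rabs (walk_moment m k) <= (step_bound * INR m) ^ k.
Proof.
  pose proof step_bound_ge0.
  revert k. induction m as [|m IH]; intros k.
  - destruct k as [|k].
    + rewrite walk_moment_0, Rabs_R1. simpl. lra.
    + rewrite walk_moment_start, Rabs_R0. apply pow_le. simpl. lra.
  - rewrite walk_moment_succ, S_INR, Rmult_plus_distr_l, Rmult_1_r, binomial.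
    eapply Rle_trans; [apply sum_f_R0_triangle|]. apply sum_Rle. intros i Hi.
    rewrite !Rabs_mult, (Rabs_pos_eq (Binomial.C k i)) by apply binomial_ge0.
    rewrite !Rmult_assoc. apply Rmult_le_compat_l; [apply binomial_ge0|].
    apply Rmult_le_compat; try apply Rabs_pos; [apply IH | apply step_moment_le].
Qed.

Lemma walk_moment_diff_le (m k : nat) :
  Rabs (walk_moment (S m) (S (S k)) - walk_moment m (S (S k))) <=
  (2 * step_bound) ^ S (S k) * INR (S m) ^ k.
Proof.
  set (c := step_bound).
  assert (Hc : 0 <= c) by apply step_bound_ge0.
  assert (Hm : 0 <= INR m) by apply pos_INR.
  rewrite walk_moment_succ, tech5, Nat.sub_diag, C_n_n, step_moment_0.
  replace (_ + 1 * walk_moment m (S (S k)) * 1 - walk_moment m (S (S k))) with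
    (sum_f_R0 (fun i => Binomial.C (S (S k)) i * walk_moment m i *
                        step_moment (S (S k) - i)) (S k)) by ring.
  eapply Rle_trans; [apply sum_f_R0_triangle|].
  apply Rle_trans
    with (sum_f_R0 (fun i => Binomial.C (S (S k)) i * (c ^ S (S k) * INR (S m) ^ k)) (S k)).
  - apply sum_Rle. intros i Hi.
    rewrite !Rabs_mult, (Rabs_pos_eq (Binomial.C (S (S k)) i)) by apply binomial_ge0.
    rewrite Rmult_assoc. apply Rmult_le_compat_l; [apply binomial_ge0|].
    assert (0 <= INR (S m) ^ k) by (apply pow_le, pos_INR).
    destruct (Nat.eq_dec i (S k)) as [->|Hik].
    + replace (S (S k) - S k)%nat with 1%nat by lia.
      rewrite step_moment_1, Rabs_R0, Rmult_0_r.
      apply Rmult_le_pos; [apply pow_le|]; assumption.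
    + assert (Hi' : (i <= k)%nat) by lia.
      assert (Hmi : INR m ^ i <= INR (S m) ^ k).
      { apply Rle_trans with (INR (S m) ^ i).
        - apply pow_incr. rewrite S_INR. lra.
        - apply Rle_pow; [rewrite S_INR; lra | exact Hi']. }
      replace (c ^ S (S k)) with (c ^ i * c ^ (S (S k) - i))
        by (rewrite <- pow_add; f_equal; lia).
      apply Rle_trans with ((c * INR m) ^ i * c ^ (S (S k) - i)).
      + apply Rmult_le_compat; try apply Rabs_pos; [apply walk_moment_le | apply step_moment_le].
      + rewrite Rpow_mult_distr.
        replace (c ^ i * INR m ^ i * c ^ (S (S k) - i))
          with (c ^ i * c ^ (S (S k) - i) * INR m ^ i) by ring.
        apply Rmult_le_compat_l; [apply Rmult_le_pos; apply pow_le|]; assumption.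
  - rewrite <- scal_sum, Rpow_mult_distr, <- (sum_binomial (S (S k))), (tech5 _ (S k)).
    pose proof (binomial_ge0 (S (S k)) (S (S k))).
    assert (0 <= c ^ S (S k) * INR (S m) ^ k)
      by (apply Rmult_le_pos; apply pow_le; [exact Hc | apply pos_INR]).
    set (s := sum_f_R0 (Binomial.C (S (S k))) (S k)). nra.
Qed.

Lemma walk_moment_le_pow_pred (m k : nat) :
  Rabs (walk_moment m (S k)) <= (2 * step_bound) ^ S k * INR m ^ k.
Proof.
  assert (Hc : 0 <= (2 * step_bound) ^ S k) by (apply pow_le; pose proof step_bound_ge0; lra).
  destruct k as [|k].
  - rewrite walk_moment_1, Rabs_R0. simpl. lra.
  - induction m as [|m IH].
    + rewrite walk_moment_start, Rabs_R0. simpl. lra.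
    + replace (walk_moment (S m) (S (S k))) with
        (walk_moment m (S (S k)) + (walk_moment (S m) (S (S k)) - walk_moment m (S (S k))))
        by ring.
      eapply Rle_trans; [apply Rabs_triang|].
      eapply Rle_trans; [apply Rplus_le_compat; [exact IH | apply walk_moment_diff_le]|].
      assert (Hm : 0 <= INR m) by apply pos_INR.
      assert (Hmk : INR m ^ k <= INR (S m) ^ k) by (apply pow_incr; rewrite S_INR; lra).
      rewrite <- Rmult_plus_distr_l. apply Rmult_le_compat_l; [exact Hc|].
      rewrite S_INR in *. simpl. nra.
Qed.

Lemma normalized_walk_moment_le_inv (n k : nat) :
  Rabs (walk_moment (S n) (S k) / INR (S n) ^ S k) <= (2 * step_bound) ^ S k / INR (S n).
Proof.
  assert (Hn : 0 < INR (S n)) by apply lt_0_INR, Nat.lt_0_succ.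
  unfold Rdiv. rewrite Rabs_mult, Rabs_inv, <- RPow_abs, (Rabs_pos_eq (INR (S n))) by lra.
  apply Rle_trans with ((2 * step_bound) ^ S k * INR (S n) ^ k * / INR (S n) ^ S k).
  - apply Rmult_le_compat_r; [left; apply Rinv_0_lt_compat, pow_lt, Hn|].
    apply walk_moment_le_pow_pred.
  - right. change (INR (S n) ^ S k) with (INR (S n) * INR (S n) ^ k).
    field. split; [|apply pow_nonzero]; lra.
Qed.

Lemma normalized_walk_moment_le (n k : nat) :
  Rabs (walk_moment (S n) k / INR (S n) ^ k) <= (2 * step_bound) ^ k.
Proof.
  destruct k as [|k].
  - rewrite walk_moment_0. simpl. rewrite Rdiv_1_r, Rabs_R1. lra.
  - eapply Rle_trans; [apply normalized_walk_moment_le_inv|].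
    assert (1 <= INR (S n)) by (apply (le_INR 1); lia).
    assert (0 <= (2 * step_bound) ^ S k) by (apply pow_le; pose proof step_bound_ge0; lra).
    unfold Rdiv. rewrite <- Rmult_1_r. apply Rmult_le_compat_l; [assumption|].
    rewrite <- Rinv_1. apply Rinv_le_contravar; lra.
Qed.

Lemma is_lim_seq_normalized_walk_moment (k : nat) :
  is_lim_seq (fun n => walk_moment (S n) k / INR (S n) ^ k) (0 ^ k).
Proof.
  destruct k as [|k].
  - apply is_lim_seq_ext with (u := fun _ => 1); [|apply is_lim_seq_const].
    intros n. rewrite walk_moment_0. simpl. field.
  - set (C := (2 * step_bound) ^ S k).
    assert (Hlim : is_lim_seq (fun n => C / INR (S n)) 0).
    { replace (Finite 0) with (Rbar_mult C (Rbar_inv p_infty)) by (simpl; f_equal; ring).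
      apply is_lim_seq_scal_l, is_lim_seq_inv; [|discriminate].
      apply (is_lim_seq_incr_1 INR), is_lim_seq_INR. }
    rewrite pow_i by lia. apply is_lim_seq_le_le with (u := fun n => - (C / INR (S n)))
      (w := fun n => C / INR (S n)).
    + intros n. apply Rabs_le_between, normalized_walk_moment_le_inv.
    + replace (Finite 0) with (Rbar_opp 0) by (simpl; f_equal; ring).
      apply (is_lim_seq_opp (fun n => C / INR (S n))), Hlim.
    + exact Hlim.
Qed.

End SignedWalk.

Lemma Series_tail_le (a b : nat -> R) (K : nat) :
  (forall k, Rabs (a k) <= b k) -> ex_series b ->
  Rabs (Series a - sum_f_R0 a K) <= Series b - sum_f_R0 b K.
Proof.
  intros Hab Hb.
  assert (Ha : ex_series a) by (apply (ex_series_le a b); assumption).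
  rewrite (Series_incr_n a (S K)), (Series_incr_n b (S K)) by (lia || assumption).
  simpl pred. replace (sum_f_R0 a K + _ - sum_f_R0 a K) with (Series (fun k => a (S K + k)))%nat
    by ring.
  replace (sum_f_R0 b K + _ - sum_f_R0 b K) with (Series (fun k => b (S K + k)))%nat by ring.
  assert (Hb' : ex_series (fun k => b (S K + k))%nat) by (apply ex_series_incr_n, Hb).
  eapply Rle_trans; [apply Series_Rabs|].
  - apply (@ex_series_le R_AbsRing R_CompleteNormedModule _ (fun k => b (S K + k)%nat));
      [|exact Hb'].
    intros k. rewrite Rabs_Rabsolu. apply Hab.
  - apply Series_le; [|exact Hb']. intros k. split; [apply Rabs_pos | apply Hab].
Qed.

Lemma is_lim_seq_sum_partial (f : nat -> nat -> R) (l : nat -> R) (K : nat) :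
  (forall k, is_lim_seq (fun n => f n k) (l k)) ->
  is_lim_seq (fun n => sum_f_R0 (f n) K) (sum_f_R0 l K).
Proof.
  intros Hlim. induction K as [|K IH]; simpl; [apply Hlim | apply is_lim_seq_plus'; auto].
Qed.

Theorem tannery (f : nat -> nat -> R) (M l : nat -> R) :
  ex_series M -> (forall n k, Rabs (f n k) <= M k) ->
  (forall k, is_lim_seq (fun n => f n k) (l k)) ->
  is_lim_seq (fun n => Series (f n)) (Series l).
Proof.
  intros HM Hdom Hlim.
  assert (Hl : forall k, Rabs (l k) <= M k).
  { intros k. apply (is_lim_seq_le (fun n => Rabs (f n k)) (fun _ => M k) (Rabs (l k)) (M k)).
    - intros n. apply Hdom.
    - apply (is_lim_seq_abs _ (l k)), Hlim.
    - apply is_lim_seq_const. }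
  apply is_lim_seq_spec. intros eps.
  assert (He : 0 < eps / 3) by (pose proof (cond_pos eps); lra).
  assert (HMlim : is_lim_seq (sum_n M) (Series M)) by exact (Series_correct M HM).
  destruct (proj2 (is_lim_seq_spec _ _) HMlim (mkposreal _ He)) as [K HK].
  specialize (HK K (le_n K)). simpl in HK. rewrite sum_n_Reals in HK.
  destruct (proj2 (is_lim_seq_spec _ _) (is_lim_seq_sum_partial f l K Hlim) (mkposreal _ He))
    as [N HN].
  exists N. intros n Hn. specialize (HN n Hn). simpl in HN.
  pose proof (Series_tail_le (f n) M K (Hdom n) HM) as Hf.
  pose proof (Series_tail_le l M K Hl HM) as Hl'.
  apply Rabs_le_between in Hf. apply Rabs_le_between in Hl'.
  apply Rabs_def2 in HK. apply Rabs_def2 in HN.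
  apply Rabs_def1; lra.
Qed.

Lemma is_series_sum_f_R0 (G : nat -> nat -> R) (L : nat -> R) (m : nat) :
  (forall j, is_series (G j) (L j)) ->
  is_series (fun k => sum_f_R0 (fun j => G j k) m) (sum_f_R0 L m).
Proof.
  intros HG. induction m as [|m IH]; simpl; [apply HG|].
  apply (is_series_plus (fun k => sum_f_R0 (fun j => G j k) m) (G (S m))); auto.
Qed.

Lemma sum_Cjna_pow (a : R) (n k : nat) : (0 < n)%nat ->
  sum_f_R0 (fun j => Cjna j n a * (tjn j n - a) ^ k) n =
  walk_moment ((1 + a) / 2) ((1 - a) / 2) (1 - a) (-1 - a) n k / INR n ^ k.
Proof.
  intros Hn. assert (INR n <> 0) by (apply not_0_INR; lia).
  unfold walk_moment, Rdiv. rewrite Rmult_comm, scal_sum. apply sum_eq. intros j _.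
  unfold Cjna, walk_weight, walk_pos, tjn.
  replace (1 - 2 * INR j / INR n - a)
    with (((INR n - INR j) * (1 - a) + INR j * (-1 - a)) * / INR n) by (field; assumption).
  rewrite Rpow_mult_distr, pow_inv. unfold Rdiv. ring.
Qed.

Theorem is_lim_seq_sum_Cjna (a : R) (g : R -> R) :
  entire (fun x => g (a + x)) ->
  is_lim_seq (fun n => sum_f_R0 (fun j => Cjna j n a * g (tjn j n)) n) (g a).
Proof.
  intros Hg. destruct (entire_pseries _ Hg) as [d [Rd Hd]].
  set (p := (1 + a) / 2). set (q := (1 - a) / 2). set (u := 1 - a). set (v := -1 - a).
  assert (Hpq : p + q = 1) by (unfold p, q; field).
  assert (Hmean : p * u + q * v = 0) by (unfold p, q, u, v; field).
  set (c := 2 * step_bound p q u v).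
  (* n = 0 is dropped: [tjn j 0] divides by zero. *)
  apply is_lim_seq_incr_1.
  apply is_lim_seq_ext
    with (u := fun n => Series (fun k => d k * (walk_moment p q u v (S n) k / INR (S n) ^ k))).
  { intros n. apply is_series_unique.
    eapply is_series_ext;
      [|apply (is_series_sum_f_R0 (fun j k => Cjna j (S n) a * (d k * (tjn j (S n) - a) ^ k)))].
    - intros k. unfold p, q, u, v. rewrite <- sum_Cjna_pow, scal_sum by lia.
      apply sum_eq. intros. ring.
    - intros j. apply (is_series_scal_l (Cjna j (S n) a) (fun k => d k * (tjn j (S n) - a) ^ k)).
      apply is_pseries_R. replace (tjn j (S n)) with (a + (tjn j (S n) - a)) at 2 by ring.
      apply Hd. }
  (* [0 ^ k] is 1 at k = 0 and 0 otherwise, so this series sums to [d 0 = g a]. *)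
  replace (g a) with (Series (fun k => d k * 0 ^ k)).
  2:{ apply is_series_unique, is_pseries_R. rewrite <- (Rplus_0_r a) at 1. apply Hd. }
  apply (tannery _ (fun k => Rabs (d k) * c ^ k)).
  - assert (Hc : 0 <= c) by (unfold c; pose proof (step_bound_ge0 p q u v); lra).
    assert (Hin := CV_disk_inside d c). rewrite Rd in Hin.
    eapply ex_series_ext; [|exact (Hin I)]. intros k. simpl.
    rewrite Rabs_mult, <- RPow_abs, (Rabs_pos_eq c) by exact Hc. reflexivity.
  - intros n k. rewrite Rabs_mult. apply Rmult_le_compat_l; [apply Rabs_pos|].
    apply normalized_walk_moment_le; assumption.
  - intros k. apply (is_lim_seq_scal_l _ (d k) (0 ^ k)).
    apply is_lim_seq_normalized_walk_moment; assumption.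
Qed.

(* [cexp (kernel_exponent z t)] is the Fock kernel k_b(z) at b = - i t / sqrt 2. *)
Definition kernel_exponent (z : C) (t : R) : C :=
  Cplus (Cmult (Cmult Ci z) (RtoC (t / sqrt 2))) (RtoC (- t ^ 2 / 4)).

Lemma entire_Re_cexp_kernel (z : C) (a : R) :
  entire (fun x => Re (cexp (kernel_exponent z (a + x)))).
Proof.
  apply entire_ext with (g := fun x =>
    exp ((- Im z * a / sqrt 2 - a ^ 2 / 4) + (- Im z / sqrt 2 - a / 2) * x + (- 1 / 4) * x ^ 2) *
    cos (Re z * a / sqrt 2 + Re z / sqrt 2 * x)).
  - intros x. unfold kernel_exponent, cexp, Cplus, Cmult, Ci, RtoC, Re, Im. cbn [fst snd].
    f_equal; f_equal; field; apply sqrt2_neq_0.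
  - apply entire_mult; [apply entire_exp_quadratic | apply entire_cos_affine].
Qed.

Lemma entire_Im_cexp_kernel (z : C) (a : R) :
  entire (fun x => Im (cexp (kernel_exponent z (a + x)))).
Proof.
  apply entire_ext with (g := fun x =>
    exp ((- Im z * a / sqrt 2 - a ^ 2 / 4) + (- Im z / sqrt 2 - a / 2) * x + (- 1 / 4) * x ^ 2) *
    sin (Re z * a / sqrt 2 + Re z / sqrt 2 * x)).
  - intros x. unfold kernel_exponent, cexp, Cplus, Cmult, Ci, RtoC, Re, Im. cbn [fst snd].
    f_equal; f_equal; field; apply sqrt2_neq_0.
  - apply entire_mult; [apply entire_exp_quadratic | apply entire_sin_affine].
Qed.

Lemma Re_sum_n (f : nat -> C) (n : nat) : Re (sum_n f n) = sum_f_R0 (fun j => Re (f j)) n.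
Proof.
  induction n as [|n IH]; [rewrite sum_O | rewrite sum_Sn; simpl; rewrite <- IH]; reflexivity.
Qed.

Lemma Im_sum_n (f : nat -> C) (n : nat) : Im (sum_n f n) = sum_f_R0 (fun j => Im (f j)) n.
Proof.
  induction n as [|n IH]; [rewrite sum_O | rewrite sum_Sn; simpl; rewrite <- IH]; reflexivity.
Qed.

Lemma filterlim_C_Re_Im (w : nat -> C) (l : C) :
  is_lim_seq (fun n => Re (w n)) (Re l) -> is_lim_seq (fun n => Im (w n)) (Im l) ->
  filterlim w eventually (locally l).
Proof.
  intros Hre Him P [eps HP].
  destruct (proj2 (is_lim_seq_spec _ _) Hre eps) as [N1 H1].
  destruct (proj2 (is_lim_seq_spec _ _) Him eps) as [N2 H2].
  exists (max N1 N2). intros n Hn. apply HP. split.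
  - apply H1. lia.
  - apply H2. lia.
Qed.

Theorem corollary3p10 (a : R) (ha : 1 < a) (z : C) :
  filterlim (fun n : nat => Ssum a z n) eventually
    (locally (cexp (Cplus (Cmult (Cmult Ci z) (RtoC (a / sqrt 2)))
                          (RtoC (- a ^ 2 / 4))))).
Proof.
  apply filterlim_C_Re_Im.
  - apply is_lim_seq_ext with (u := fun n =>
      sum_f_R0 (fun j => Cjna j n a * Re (cexp (kernel_exponent z (tjn j n)))) n).
    { intros n. unfold Ssum. rewrite Re_sum_n. apply sum_eq. intros j _. simpl. ring. }
    apply (is_lim_seq_sum_Cjna a (fun t => Re (cexp (kernel_exponent z t)))).
    apply entire_Re_cexp_kernel.
  - apply is_lim_seq_ext with (u := fun n =>
      sum_f_R0 (fun j => Cjna j n a * Im (cexp (kernel_exponent z (tjn j n)))) n).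
    { intros n. unfold Ssum. rewrite Im_sum_n. apply sum_eq. intros j _. simpl. ring. }
    apply (is_lim_seq_sum_Cjna a (fun t => Im (cexp (kernel_exponent z t)))).
    apply entire_Im_cexp_kernel.
Qed.
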